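(* Let $b=(\mu_1>\dots>\mu_l>0)\in\mathcal{Y}(0)$, $m=\mu_1$, $n=l$, assume $m>n$, and let $(i_{n+1}\ge i_{n+2}\ge\dots\ge i_m)$ be the conjugate partition of $\tilde b=(\mu_1-n,\mu_2-(n-1),\dots,\mu_l-1)$. For $0\le k\le m-n$ define a block $B_k$, a string of $L_k$ equal signs, where $L_k=i_{n+k}-i_{n+k+1}$ for $1\le k\le m-n-1$, $L_{m-n}=i_m$, and $L_0$ is specified below. Then the relevant $i$-signature of $b$ equals the concatenation $B_0B_1\cdots B_{m-n}$, as follows: (1) If $m,n$ are both even, the $0$-signature, and if $m,n$ are both odd, the $1$-signature, is given by $L_0=n+1-i_{n+1}$, with $B_k$ consisting of $+$ signs for $k$ even and $-$ signs for $k$ odd. (2) If $m$ is even and $n$ odd, the $0$-signature, and if $m$ is odd and $n$ even, the $1$-signature, is given by $L_0=n-i_{n+1}$, with $B_k$ consisting of $-$ signs for $k$ even and $+$ signs for $k$ odd. (3) If $m$ is odd and $n$ even, the $0$-signature, and if $m$ is even and $n$ odd, the $1$-signature, is given by $L_0=n+1-i_{n+1}$, with $B_k$ consisting of $+$ signs for $k$ even and $-$ signs for $k$ odd. (4) If $m,n$ are both odd, the $0$-signature, and if $m,n$ are both even, the $1$-signature, is given by $L_0=n-i_{n+1}$, with $B_k$ consisting of $-$ signs for $k$ even and $+$ signs for $k$ odd. (Blocks of length $0$ are empty.)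
   Context: A charged partition of charge $j\in\{0,1\}$ is a partition (possibly empty) whose Young diagram (rows numbered from the top, columns from the left) has the box in row $r$, column $c$ labelled $j-r+c\pmod 2$. $\mathcal{Y}(0)$ is the set of charge-$0$ charged partitions with distinct nonzero parts. A column is $i$-removable if its bottom box is labelled $i$ and removing it leaves a Young diagram; it is $i$-addable if a box labelled $i$ can be added at its bottom leaving a Young diagram. The $i$-signature is the string of signs obtained by scanning the columns from left to right, including the first empty column (column $\mu_1+1$), writing $+$ for each $i$-addable column, $-$ for each $i$-removable column, and nothing otherwise. *)

From mathcomp Require Import all_boot.
Set Implicit Arguments. Unset Strict Implicit. Unset Printing Implicit Defensive.

(* A partition is a seq nat listing its nonzero parts mu_1, mu_2, ... (rows
   numbered from 1, top to bottom; columns numbered from 1, left to right). *)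

(* mu_r, for r >= 1 (0 beyond the length). *)
Definition part (mu : seq nat) (r : nat) : nat := nth 0 mu r.-1.

Definition colheight (mu : seq nat) (c : nat) : nat := count (fun x => c <= x) mu.

(* label of box (r, c) in a charged partition of charge j:
   (j - r + c) mod 2, written as (j + r + c) mod 2 since -r = r mod 2. *)
Definition label (j r c : nat) : nat := (j + r + c) %% 2.

(* Y(0): charge-0 charged partitions with distinct nonzero parts
   (the charge is fixed to 0 by the use of [label 0] below). *)
Definition inY0 (mu : seq nat) : bool := sorted gtn mu && all (fun x => 0 < x) mu.

Definition removable (j i : nat) (mu : seq nat) (c : nat) : bool :=
  [&& 0 < colheight mu c,
      label j (colheight mu c) c == i &
      part mu (colheight mu c) == c].

(* column c is i-addable (charge j): the box (colheight c + 1, c) is labelled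
   i and adding it gives a Young diagram *)
Definition addable (j i : nat) (mu : seq nat) (c : nat) : bool :=
  (label j (colheight mu c).+1 c == i) &&
  ((c == 1) || (colheight mu c < colheight mu c.-1)).

Inductive sign := Plus | Minus.

Definition signature (j i : nat) (mu : seq nat) : seq sign :=
  flatten [seq (if addable j i mu c then [:: Plus] else [::]) ++
               (if removable j i mu c then [:: Minus] else [::])
          | c <- iota 1 (part mu 1).+1].

(* With n = size mu, btilde = (mu_1 - n, mu_2 - (n-1), ..., mu_n - 1);
   [itilde mu t] is i_t, the (t-n)-th part of the conjugate of btilde,
   i.e. #{ r in 1..n | mu_r - (n - r + 1) >= t - n }, for n+1 <= t <= m. *)
Definition itilde (mu : seq nat) (t : nat) : nat :=
  let n := size mu in
  count (fun r => t - n <= part mu r - (n - r + 1)) (iota 1 n).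

Definition blen (mu : seq nat) (L0 k : nat) : nat :=
  let m := part mu 1 in let n := size mu in
  if k == 0 then L0
  else if k == m - n then itilde mu m
  else itilde mu (n + k) - itilde mu (n + k + 1).

Definition blocks (mu : seq nat) (L0 : nat) (s_even s_odd : sign) : seq sign :=
  let m := part mu 1 in let n := size mu in
  flatten [seq nseq (blen mu L0 k) (if odd k then s_odd else s_even)
          | k <- iota 0 (m - n).+1].

From mathcomp Require Import all_boot zify.
Set Implicit Arguments. Unset Strict Implicit.

(* Deleting the first row x of a strict partition [x :: s] moves every other box
   up one row, which flips its label: the i-signature of [x :: s] is the
   i-signature of [s] for the opposite charge, followed by the signs of the
   removable column x and the addable column x + 1 of the first row.  For a
   binary label exactly one of these two survives, and its sign depends only on
   the parity of x.  Unwinding, the signature is a leading [+] from the empty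
   column (when n + i is even) followed by one sign per entry b of btilde, in
   increasing order of b, whose sign is given by the parity of n + b + i.  The
   entries of btilde equal to k >= 1 are counted by i_(n+k) - i_(n+k+1), so
   grouping equal entries yields the blocks B_k. *)

Lemma inY0_cons x s : inY0 (x :: s) -> [/\ inY0 s, 0 < x & part s 1 < x].
Proof.
rewrite /inY0 /= => /andP[Hs /andP[Hx Ha]].
rewrite (path_sorted Hs) Ha Hx; split=> //.
by case: s Hs {Ha} => [|z s] //= /andP[].
Qed.

Lemma colheight_cons x s c : colheight (x :: s) c = (c <= x) + colheight s c.
Proof. by []. Qed.

Lemma colheight_out s c : inY0 s -> part s 1 < c -> colheight s c = 0.
Proof.
elim: s => [|x s IHs] // /inY0_cons[Hs _ Hsx] Hxc.
rewrite /part /= in Hxc.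
by rewrite colheight_cons IHs //; [rewrite leqNgt Hxc | lia].
Qed.

Lemma colheight_gt0 s c : 0 < c -> c <= part s 1 -> 0 < colheight s c.
Proof. by case: s => [|x s] c_gt0; rewrite /part /colheight /=; [lia | move=> ->]. Qed.

Lemma size_le_part1 s : inY0 s -> size s <= part s 1.
Proof.
elim: s => [|x s IHs] //= /inY0_cons[Hs _ Hsx].
by have := IHs Hs; rewrite /part /= in Hsx *; lia.
Qed.

Definition colsig j i mu c : seq sign :=
  (if addable j i mu c then [:: Plus] else [::]) ++
  (if removable j i mu c then [:: Minus] else [::]).

Lemma signatureE j i mu :
  signature j i mu = flatten [seq colsig j i mu c | c <- iota 1 (part mu 1).+1].
Proof. by []. Qed.

(* Each of these columns is one box longer than in [s], which shifts its labels
   as raising the charge by one does. *)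
Lemma colsig_cons_low j i x s c : inY0 (x :: s) -> 0 < c <= part s 1 ->
  colsig j i (x :: s) c = colsig j.+1 i s c.
Proof.
case/inY0_cons => _ _ Hsx /andP[c_gt0 c_le].
have Eh : colheight (x :: s) c = (colheight s c).+1.
  by rewrite colheight_cons (_ : c <= x) //; lia.
have Eh' : colheight (x :: s) c.-1 = (colheight s c.-1).+1.
  by rewrite colheight_cons (_ : c.-1 <= x) //; lia.
have labelS r : label j r.+1 c = label j.+1 r c by rewrite /label addSnnS.
rewrite /colsig /addable /removable Eh Eh' ltnS.
by case: (colheight s c) (colheight_gt0 c_gt0 c_le) => [|h] // _; rewrite !labelS.
Qed.

Lemma colsig_last j i s : inY0 s ->
  colsig j i s (part s 1).+1 =
  if label j 1 (part s 1).+1 == i then [:: Plus] else [::].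
Proof.
move=> Hs; have Eh := colheight_out Hs (ltnSn (part s 1)).
have Eh' : ((part s 1).+1 == 1) || (0 < colheight s (part s 1)).
  by case Ey: (part s 1) => [|y] //=; apply: colheight_gt0; rewrite ?Ey.
by rewrite /colsig /addable /removable Eh Eh' andbT /= cats0.
Qed.

Lemma colsig_cons_next j i x s : inY0 (x :: s) ->
  colsig j i (x :: s) (part s 1).+1 =
  (if label j.+1 1 (part s 1).+1 == i then [:: Plus] else [::]) ++
  (if (x == (part s 1).+1) && (label j 1 x == i) then [:: Minus] else [::]).
Proof.
move=> Hxs; have [Hs _ Hsx] := inY0_cons Hxs.
set y := part s 1 in Hsx *.
have Eh : colheight (x :: s) y.+1 = 1.
  by rewrite colheight_cons (colheight_out Hs (ltnSn _)) Hsx.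
have Eh' : (y.+1 == 1) || (1 < colheight (x :: s) y).
  case Ey: y Hsx => [|y'] //= Hy'x.
  have : 0 < colheight s y'.+1 by apply: colheight_gt0; rewrite // -Ey.
  by rewrite (ltnW Hy'x); lia.
rewrite /colsig /addable /removable Eh Eh' andbT /= /label /part /= addSnnS.
by case: (eqVneq x y.+1) => [->|_]; rewrite ?andbT ?andbF.
Qed.

Lemma colsig_cons_high j i x s c : inY0 (x :: s) -> (part s 1).+1 < c <= x.+1 ->
  colsig j i (x :: s) c =
  (if (c == x.+1) && (label j 1 x.+1 == i) then [:: Plus] else [::]) ++
  (if (c == x) && (label j 1 x == i) then [:: Minus] else [::]).
Proof.
move=> Hxs /andP[Hyc Hcx]; have [Hs _ Hsx] := inY0_cons Hxs.
have Eh : colheight (x :: s) c = (c <= x).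
  by rewrite colheight_cons (colheight_out Hs) ?addn0 //; lia.
have Eh' : colheight (x :: s) c.-1 = 1.
  rewrite colheight_cons (colheight_out Hs) ?addn0; [|lia].
  by have -> : c.-1 <= x by lia.
have c_neq1 : (c == 1) = false by apply/eqP; lia.
rewrite /colsig /addable /removable Eh Eh' c_neq1 /part /=.
case: (ltngtP c x.+1) Hcx => // [|-> _].
  by rewrite ltnS => -> _ /=; case: (eqVneq c x) => [->|_]; rewrite ?andbT ?andbF.
have -> : (x.+1 == x) = false by apply/eqP; lia.
by rewrite ltnn /= andbT cats0.
Qed.

Lemma flatten_map_if_eq (T : eqType) (U : Type) (a : T) (A : seq U) s : uniq s ->
  flatten [seq if c == a then A else [::] | c <- s] = if a \in s then A else [::].
Proof.
elim: s => //= c s IHs /andP[c_notin s_uniq]; rewrite inE IHs // eq_sym.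
by case: eqVneq => [->|_] //; rewrite (negbTE c_notin) cats0.
Qed.

Lemma flatten_colsig_cons_high j i x s : inY0 (x :: s) ->
  flatten [seq colsig j i (x :: s) c | c <- iota (part s 1).+2 (x - part s 1)] =
  (if ((part s 1).+1 < x) && (label j 1 x == i) then [:: Minus] else [::]) ++
  (if label j 1 x.+1 == i then [:: Plus] else [::]).
Proof.
move=> Hxs; have [_ _ Hsx] := inY0_cons Hxs.
set y := part s 1 in Hsx *.
have -> : iota y.+2 (x - y) = iota y.+2 (x - y).-1 ++ [:: x.+1].
  by rewrite {1}(_ : x - y = (x - y).-1 + 1) ?iotaD; [congr (_ ++ [:: _]) | ]; lia.
rewrite map_cat flatten_cat /= cats0 colsig_cons_high ?eqxx //=; last by apply/andP; lia.
rewrite (_ : (x.+1 == x) = false) ?cats0; last by apply/eqP; lia.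
congr (_ ++ _).
have colsig_mid c : c \in iota y.+2 (x - y).-1 -> colsig j i (x :: s) c =
    if c == x then (if label j 1 x == i then [:: Minus] else [::]) else [::].
  rewrite mem_iota => Hc; rewrite colsig_cons_high //; last by apply/andP; lia.
  by rewrite (_ : (c == x.+1) = false) /=; [case: (c == x) | apply/eqP; lia].
rewrite (iffLR (eq_in_map _ _ _) colsig_mid).
rewrite flatten_map_if_eq ?iota_uniq // mem_iota.
have -> : (y.+2 <= x < y.+2 + (x - y).-1) = (y.+1 < x) by lia.
by case: (y.+1 < x).
Qed.

Lemma signature_cons j i x s : inY0 (x :: s) ->
  signature j i (x :: s) = signature j.+1 i s ++
   (if label j 1 x == i then [:: Minus] else [::]) ++
   (if label j 1 x.+1 == i then [:: Plus] else [::]).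
Proof.
move=> Hxs; have [Hs _ Hsx] := inY0_cons Hxs.
rewrite !signatureE (_ : part (x :: s) 1 = x) //.
set y := part s 1 in Hsx *.
have -> : iota 1 x.+1 = iota 1 y ++ y.+1 :: iota y.+2 (x - y).
  by rewrite {1}(_ : x.+1 = y + (x - y).+1) ?iotaD ?add1n //; lia.
have -> : iota 1 y.+1 = iota 1 y ++ [:: y.+1].
  by rewrite -[y.+1 in LHS]addn1 iotaD add1n.
rewrite !map_cat !flatten_cat -catA.
have -> : [seq colsig j i (x :: s) c | c <- iota 1 y] = [seq colsig j.+1 i s c | c <- iota 1 y].
  by apply/eq_in_map => c; rewrite mem_iota => Hc; apply: colsig_cons_low => //; lia.
congr (_ ++ _).
rewrite /= cats0 colsig_cons_next // colsig_last // flatten_colsig_cons_high // -/y !catA.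
congr (_ ++ _); rewrite -catA; congr (_ ++ _).
case: (label j 1 x == i); rewrite ?andbT ?andbF //.
have [->|x_neq] := eqVneq x y.+1; first by rewrite ltnn.
by rewrite ltn_neqAle eq_sym x_neq Hsx.
Qed.

Definition parity_sign (k : nat) : sign := if odd k then Minus else Plus.

Lemma row_signs j i x : i < 2 ->
  (if label j 1 x == i then [:: Minus] else [::]) ++
  (if label j 1 x.+1 == i then [:: Plus] else [::]) = [:: parity_sign (j + x + i)].
Proof.
rewrite /label /parity_sign !modn2 !oddD /=.
by case: i => [|[|]] // _; case: (odd j); case: (odd x).
Qed.

Fixpoint btilde (mu : seq nat) : seq nat :=
  if mu is x :: s then (x - size mu) :: btilde s else [::].

Lemma size_btilde mu : size (btilde mu) = size mu.
Proof. by elim: mu => //= x s ->. Qed.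

Lemma btilde_le mu : inY0 mu -> all (fun b => b <= part mu 1 - size mu) (btilde mu).
Proof.
elim: mu => // x s IHs Hxs; have [Hs _ Hsx] := inY0_cons Hxs.
rewrite /= leqnn /=; apply: sub_all (IHs Hs) => b /=.
have := size_le_part1 Hs; rewrite /part /= in Hsx *; lia.
Qed.

Lemma btilde_sorted mu : inY0 mu -> sorted geq (btilde mu).
Proof.
elim: mu => // x [|y s] IHs Hxs //; have [Hs _ Hys] := inY0_cons Hxs.
have := size_le_part1 Hs; rewrite /= in IHs *; rewrite (IHs Hs) andbT.
by rewrite /part /= in Hys *; lia.
Qed.

Lemma signature_btilde j i mu : inY0 mu -> i < 2 ->
  signature j i mu =
  (if odd (j + size mu + i) then [::] else [:: Plus]) ++
  map (fun b => parity_sign (j + size mu + b + i)) (rev (btilde mu)).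
Proof.
move=> + i_lt2; elim: mu j => [|x s IHs] j.
  move=> _; rewrite /signature /addable /removable /part /= /label.
  rewrite andbT !cats0 addn0 -addnA modn2 !oddD /=.
  by case: i i_lt2 => [|[|]] //; case: (odd j).
move=> Hxs; have [Hs _ _] := inY0_cons Hxs; have := size_le_part1 Hxs.
rewrite /part /= => Hsx.
rewrite signature_cons // row_signs // IHs // rev_cons map_rcons -cats1 -catA.
by rewrite !addSnnS; congr (_ ++ (_ ++ [:: parity_sign _])); lia.
Qed.

Lemma flatten_map_nil (S : eqType) (T : Type) (F : S -> seq T) s :
  {in s, forall x, F x = [::]} -> flatten (map F s) = [::].
Proof.
elim: s => //= x s IHs F0; rewrite F0 ?mem_head // IHs // => y y_in.
by apply: F0; rewrite inE y_in orbT.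
Qed.

Lemma map_sorted_runs (T : Type) (f : nat -> T) s a K :
  sorted leq s -> all (fun b => a <= b <= a + K) s ->
  map f s = flatten [seq nseq (count_mem k s) (f k) | k <- iota a K.+1].
Proof.
elim: s a K => [|x s IHs] a K s_sorted s_range.
  by rewrite flatten_map_nil.
have x_le_s : all (leq x) s by move: s_sorted; rewrite /= (path_sortedE leq_trans) => /andP[].
case/andP: s_range => /andP[a_le_x x_le] s_range.
have -> : iota a K.+1 = iota a (x - a) ++ x :: iota x.+1 (a + K - x).
  by rewrite {1}(_ : K.+1 = (x - a) + (a + K - x).+1) ?iotaD ?subnKC //; lia.
rewrite map_cat flatten_cat flatten_map_nil; last first.
  move=> c; rewrite mem_iota => c_lt_x.
  suff -> : count_mem c (x :: s) = 0 by [].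
  apply/count_memPn; rewrite inE negb_or; apply/andP; split; first by apply/eqP; lia.
  by apply/negP => /(allP x_le_s); lia.
rewrite /= eqxx nseqD -catA; congr (_ :: _).
have -> : [seq nseq (count_mem k (x :: s)) (f k) | k <- iota x.+1 (a + K - x)] =
          [seq nseq (count_mem k s) (f k) | k <- iota x.+1 (a + K - x)].
  apply/eq_in_map => k; rewrite mem_iota => k_gt_x.
  by rewrite /= (_ : (x == k) = false) //; apply/eqP; lia.
apply: IHs; first exact: path_sorted s_sorted.
by apply/allP => b b_in; have := allP x_le_s b b_in; have := allP s_range b b_in; lia.
Qed.

Lemma count_btilde (p : pred nat) mu : count p (btilde mu) =
  count (fun r => p (part mu r - (size mu - r + 1))) (iota 1 (size mu)).
Proof.
elim: mu => //= x s ->; rewrite /part /= subn1 addn1 -[2]/(1 + 1) iotaDl count_map.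
by congr (_ + _); apply: eq_in_count => -[|r]; rewrite mem_iota.
Qed.

Lemma itilde_count mu t : itilde mu t = count (fun b => t - size mu <= b) (btilde mu).
Proof. by rewrite count_btilde. Qed.

Lemma count_geq k s :
  count (fun b => k <= b) s = count_mem k s + count (fun b => k < b) s.
Proof. by elim: s => //= b s ->; rewrite leq_eqVlt; case: ltngtP => /=; lia. Qed.

Lemma count_mem_btilde mu L0 k : inY0 mu -> 0 < k ->
  count_mem k (btilde mu) = blen mu L0 k.
Proof.
move=> Hmu k_gt0; rewrite /blen (negbTE (lt0n_neq0 k_gt0)).
case: eqVneq => [k_eq|_].
  rewrite itilde_count -k_eq count_geq.
  rewrite [X in _ + X](_ : _ = 0) ?addn0 // -(count_pred0 (btilde mu)).
  by apply: eq_in_count => b /(allP (btilde_le Hmu)); rewrite -k_eq /= ltnNge => ->.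
by rewrite !itilde_count -addnA !addKn addn1 count_geq addnK.
Qed.

Lemma count_mem0_btilde mu : count_mem 0 (btilde mu) = size mu - itilde mu (size mu + 1).
Proof.
rewrite itilde_count addKn -(size_btilde mu) -(count_predT (btilde mu)).
by rewrite (eq_count (a2 := fun b => 0 <= b)) // count_geq addnK.
Qed.

Lemma signature_blocks mu i : inY0 mu -> i < 2 ->
  signature 0 i mu =
  if odd (size mu + i) then blocks mu (size mu - itilde mu (size mu + 1)) Minus Plus
  else blocks mu (size mu + 1 - itilde mu (size mu + 1)) Plus Minus.
Proof.
move=> Hmu i_lt2; set n := size mu; set m := part mu 1.
have runs : map (fun b => parity_sign (n + b + i)) (rev (btilde mu)) =
    flatten [seq nseq (count_mem k (btilde mu)) (parity_sign (n + k + i))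
            | k <- iota 0 (m - n).+1].
  rewrite (@map_sorted_runs _ _ _ 0 (m - n)).
  - by congr flatten; apply/eq_map => k; rewrite count_rev.
  - by rewrite rev_sorted; exact: btilde_sorted.
  - by rewrite all_rev; apply: sub_all (btilde_le Hmu) => b.
have tail L0 : flatten [seq nseq (count_mem k (btilde mu)) (parity_sign (n + k + i))
                       | k <- iota 1 (m - n)] =
               flatten [seq nseq (blen mu L0 k)
                         (if odd k then parity_sign (n + i).+1 else parity_sign (n + i))
                       | k <- iota 1 (m - n)].
  congr flatten; apply/eq_in_map => k; rewrite mem_iota => /andP[k_gt0 _].
  rewrite (count_mem_btilde L0) // /parity_sign addnAC oddD oddS.
  by case: (odd k); case: (odd (n + i)).
have itilde_le : itilde mu (n + 1) <= n.
  by rewrite itilde_count -[X in _ <= X](size_btilde mu) count_size.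
rewrite signature_btilde // add0n runs /blocks -/m -/n /= addn0 count_mem0_btilde.
case E: (odd (n + i)).
  by rewrite (tail (n - itilde mu (n + 1))) {1}/blen /parity_sign oddS E.
rewrite (tail (n + 1 - itilde mu (n + 1))) {1}/blen /parity_sign oddS E /=.
by rewrite (_ : n + 1 - _ = (n - itilde mu (n + 1)).+1) //; lia.
Qed.

Theorem mainTheorem9 (mu : seq nat) :
  inY0 mu ->
  let m := part mu 1 in
  let n := size mu in
  n < m ->
  (
   (* (1) *)
   (~~ odd m -> ~~ odd n ->
      signature 0 0 mu = blocks mu (n + 1 - itilde mu (n + 1)) Plus Minus) /\
   (odd m -> odd n ->
      signature 0 1 mu = blocks mu (n + 1 - itilde mu (n + 1)) Plus Minus) /\
   (* (2) *)
   (~~ odd m -> odd n ->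
      signature 0 0 mu = blocks mu (n - itilde mu (n + 1)) Minus Plus) /\
   (odd m -> ~~ odd n ->
      signature 0 1 mu = blocks mu (n - itilde mu (n + 1)) Minus Plus) /\
   (* (3) *)
   (odd m -> ~~ odd n ->
      signature 0 0 mu = blocks mu (n + 1 - itilde mu (n + 1)) Plus Minus) /\
   (~~ odd m -> odd n ->
      signature 0 1 mu = blocks mu (n + 1 - itilde mu (n + 1)) Plus Minus) /\
   (* (4) *)
   (odd m -> odd n ->
      signature 0 0 mu = blocks mu (n - itilde mu (n + 1)) Minus Plus) /\
   (~~ odd m -> ~~ odd n ->
      signature 0 1 mu = blocks mu (n - itilde mu (n + 1)) Minus Plus)).
Proof.
move=> Hmu m n _.
have sig0 := signature_blocks Hmu (isT : 0 < 2).
have sig1 := signature_blocks Hmu (isT : 1 < 2).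
rewrite addn0 in sig0; rewrite [in odd _]addn1 oddS in sig1.
by split; [|split; [|split; [|split; [|split; [|split; [|split]]]]]] => _ Hn;
  rewrite ?sig0 ?sig1 -/n ?Hn ?(negbTE Hn).
Qed.
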